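(* Let $B$ be a commutative ring with identity and $A$ a subring of $B$ containing the identity which is a dense subring of $B$ and a weak completely normal subring of $B$. Then for any two distinct maximal ideals $M, M'$ of $B$, $(M\cap A)+(M'\cap A)=A$.
   Context: $\operatorname{spec} A$ is the set of prime ideals of $A$ with the Zariski topology. A subring $A$ of $B$ is dense in $B$ if for every ideal $I$ of $B$ and every $b\in B\setminus \operatorname{rad}(I)$ there exists $a\in B\setminus\operatorname{rad}(I)$ with $ab\in A$. A subring $A$ of $B$ is a weak completely normal subring of $B$ if for any two distinct maximal ideals $M\neq M'$ of $B$ such that $M\cap A$ and $M'\cap A$ are non-comparable, $\operatorname{cl}_{\operatorname{spec} A}\{M\cap A\}\cap \operatorname{cl}_{\operatorname{spec} A}\{M'\cap A\}=\emptyset$. *)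

From mathcomp Require Import all_boot all_algebra.
Set Implicit Arguments. Unset Strict Implicit. Unset Printing Implicit Defensive.
Import GRing.Theory.
Local Open Scope ring_scope.

Section Defs.
Variable B : comPzRingType.

Definition is_subring (A : B -> Prop) : Prop :=
  A 1 /\ (forall x y, A x -> A y -> A (x - y)) /\ (forall x y, A x -> A y -> A (x * y)).

Definition is_ideal (I : B -> Prop) : Prop :=
  I 0 /\ (forall x y, I x -> I y -> I (x + y)) /\ (forall b x, I x -> I (b * x)).

Definition is_maximal_ideal (M : B -> Prop) : Prop :=
  is_ideal M /\ ~ M 1 /\
  forall J, is_ideal J -> (forall x, M x -> J x) -> ~ J 1 -> forall x, J x -> M x.

Definition rad (I : B -> Prop) : B -> Prop := fun x => exists n : nat, I (x ^+ n).

Definition is_ideal_of (A I : B -> Prop) : Prop :=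
  (forall x, I x -> A x) /\ I 0 /\ (forall x y, I x -> I y -> I (x + y)) /\
  (forall a x, A a -> I x -> I (a * x)).

(* P is a prime ideal of A, i.e. a point of spec A. *)
Definition is_prime_ideal_of (A P : B -> Prop) : Prop :=
  is_ideal_of A P /\ ~ P 1 /\
  forall a b, A a -> A b -> P (a * b) -> P a \/ P b.

(* Zariski topology on spec A: closed sets are V(E) = {P in spec A | E ⊆ P}
   for subsets E of A. *)
Definition zariski_closure (A : B -> Prop) (S : (B -> Prop) -> Prop) :
    (B -> Prop) -> Prop :=
  fun Q => is_prime_ideal_of A Q /\
    forall E : B -> Prop, (forall x, E x -> A x) ->
      (forall P, S P -> is_prime_ideal_of A P /\ forall x, E x -> P x) ->
      forall x, E x -> Q x.

Definition cap (M A : B -> Prop) : B -> Prop := fun x => M x /\ A x.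

Definition subset (X Y : B -> Prop) : Prop := forall x, X x -> Y x.

Definition dense_subring (A : B -> Prop) : Prop :=
  forall I, is_ideal I -> forall b, ~ rad I b ->
    exists a, ~ rad I a /\ A (a * b).

Definition singleton_pt (P : B -> Prop) : (B -> Prop) -> Prop := fun Q => Q = P.

Definition weak_completely_normal (A : B -> Prop) : Prop :=
  forall M M', is_maximal_ideal M -> is_maximal_ideal M' -> ~ (forall x, M x <-> M' x) ->
    ~ subset (cap M A) (cap M' A) -> ~ subset (cap M' A) (cap M A) ->
    forall Q, zariski_closure A (singleton_pt (cap M A)) Q ->
              zariski_closure A (singleton_pt (cap M' A)) Q -> False.

Definition ideal_sum (I J : B -> Prop) : B -> Prop :=
  fun z => exists x y, I x /\ J y /\ z = x + y.
End Defs.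

(* Density separates distinct maximal ideals: for b in M \ M' it yields a with
   a b in A, a b in M and a b not in M' (as M' = rad M' is prime), so M ∩ A and
   M' ∩ A are incomparable.  If (M ∩ A) + (M' ∩ A) were a proper ideal of A, it
   would lie in a prime Q of A (Zorn), and Q would belong to the closures of both
   points M ∩ A and M' ∩ A of spec A, contradicting weak complete normality. *)
From Pilot Require Import Defs.
From mathcomp Require Import all_boot all_algebra.
From mathcomp Require Import boolp.
From mathcomp Require classical_sets.
Set Implicit Arguments.
Unset Strict Implicit.
Unset Printing Implicit Defensive.

Import GRing.Theory.
Local Open Scope ring_scope.

Definition proper_ideal_of (B : comPzRingType) (A I : B -> Prop) : Prop :=
  is_ideal_of A I /\ ~ I 1.

Definition maximal_ideal_of (B : comPzRingType) (A N : B -> Prop) : Prop :=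
  proper_ideal_of A N /\
  forall C, proper_ideal_of A C -> Defs.subset N C -> Defs.subset C N.

Definition principal_ideal_of (B : comPzRingType) (A : B -> Prop) (a : B) :
  B -> Prop := fun x => exists2 r, A r & x = r * a.

Section Subring.
Variables (B : comPzRingType) (A : B -> Prop).
Hypothesis subA : is_subring A.
Implicit Types I J N : B -> Prop.

Lemma subring1 : A 1.
Proof. by case: subA. Qed.

Lemma subring0 : A 0.
Proof. by case: subA => A1 [AB _]; rewrite -(subrr 1); apply: AB. Qed.

Lemma subringN x : A x -> A (- x).
Proof. by case: subA => _ [AB _] Ax; rewrite -sub0r; apply: AB => //; apply: subring0. Qed.

Lemma subringD x y : A x -> A y -> A (x + y).
Proof. by case: subA => _ [AB _] Ax /subringN Ay; rewrite -[y]opprK; apply: AB. Qed.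

Lemma subringM x y : A x -> A y -> A (x * y).
Proof. by case: subA => _ [_]; apply. Qed.

Lemma is_ideal_of_principal a : A a -> is_ideal_of A (principal_ideal_of A a).
Proof.
move=> Aa; split; [|split; [|split]].
- by move=> _ [r Ar ->]; apply: subringM.
- by exists 0; [apply: subring0 | rewrite mul0r].
- by move=> _ _ [r Ar ->] [s As ->]; exists (r + s); [apply: subringD | rewrite mulrDl].
- by move=> c _ Ac [r Ar ->]; exists (c * r); [apply: subringM | rewrite mulrA].
Qed.

Lemma is_ideal_of_sum I J :
  is_ideal_of A I -> is_ideal_of A J -> is_ideal_of A (ideal_sum I J).
Proof.
move=> [IA [I0 [ID IM]]] [JA [J0 [JD JM]]]; split; [|split; [|split]].
- by move=> _ [x [y [Ix [Jy ->]]]]; apply: subringD; [apply: IA | apply: JA].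
- by exists 0, 0; rewrite addr0.
- move=> _ _ [x [y [Ix [Jy ->]]]] [x' [y' [Ix' [Jy' ->]]]].
  exists (x + x'), (y + y'); split; [exact: ID | split; [exact: JD | exact: addrACA]].
- move=> c _ Ac [x [y [Ix [Jy ->]]]].
  exists (c * x), (c * y); split; [exact: IM | split; [exact: JM | exact: mulrDr]].
Qed.

Lemma ideal_sum_subl I J : J 0 -> Defs.subset I (ideal_sum I J).
Proof. by move=> J0 x Ix; exists x, 0; rewrite addr0. Qed.

Lemma ideal_sum_subr I J : I 0 -> Defs.subset J (ideal_sum I J).
Proof. by move=> I0 y Jy; exists 0, y; rewrite add0r. Qed.

Lemma ideal_of_1_all I : is_ideal_of A I -> I 1 -> forall z, A z -> I z.
Proof. by move=> [_ [_ [_ IM]]] I1 z Az; rewrite -[z]mulr1; apply: IM. Qed.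

Lemma is_ideal_of_cap M : is_ideal M -> is_ideal_of A (cap M A).
Proof.
move=> [M0 [MD MM]]; split; [by move=> x [] | split; [|split]].
- by split; [|apply: subring0].
- by move=> x y [Mx Ax] [My Ay]; split; [apply: MD | apply: subringD].
- by move=> a x Aa [Mx Ax]; split; [apply: MM | apply: subringM].
Qed.

Lemma maximal_ideal_of_prime N : maximal_ideal_of A N -> is_prime_ideal_of A N.
Proof.
move=> [[idN nN1] maxN]; split=> //; split=> // a b Aa Ab Nab.
have [Na | nNa] := pselect (N a); [by left | right].
case: (idN) => _ [N0 [ND NM]].
pose K := ideal_sum N (principal_ideal_of A a).
have idK : is_ideal_of A K by apply: is_ideal_of_sum => //; apply: is_ideal_of_principal.
have NK : Defs.subset N K by apply: ideal_sum_subl; exists 0; [apply: subring0 | rewrite mul0r].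
have [n [_ [Nn [[r Ar ->] E]]]] : K 1.
  apply: contrapT => nK1; apply: nNa; apply: (maxN K) => //.
  by apply: ideal_sum_subr => //; exists 1; [apply: subring1 | rewrite mul1r].
have -> : b = b * n + r * (a * b).
  by rewrite -[b in LHS]mulr1 E mulrDr mulrCA [a * b]mulrC.
by apply: ND; apply: NM.
Qed.

Lemma proper_ideal_of_chain_union (F : (B -> Prop) -> Prop) :
  (exists X, F X) -> (forall X, F X -> proper_ideal_of A X) ->
  (forall X Y, F X -> F Y -> Defs.subset X Y \/ Defs.subset Y X) ->
  proper_ideal_of A (fun x => exists2 X, F X & X x).
Proof.
move=> [X0 FX0] FP Ftot.
have common_member x y X Y : F X -> F Y -> X x -> Y y ->
    exists2 Z, F Z & Z x /\ Z y.
  move=> FX FY Xx Yy; have [XY | YX] := Ftot X Y FX FY.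
  - by exists Y => //; split=> //; apply: XY.
  - by exists X => //; split=> //; apply: YX.
split; [split; [|split; [|split]] |].
- by move=> x [X /FP [[XA _] _] Xx]; apply: XA.
- by exists X0 => //; have [[_ []]] := FP X0 FX0.
- move=> x y [X FX Xx] [Y FY Yy]; have [Z FZ [Zx Zy]] := common_member x y X Y FX FY Xx Yy.
  by exists Z => //; have [[_ [_ [ZD _]]] _] := FP Z FZ; apply: ZD.
- by move=> a x Aa [X FX Xx]; exists X => //; have [[_ [_ [_ XM]]] _] := FP X FX; apply: XM.
- by move=> [X /FP [_ nX1] X1].
Qed.

Lemma exists_maximal_ideal_of J :
  proper_ideal_of A J -> exists N, Defs.subset J N /\ maximal_ideal_of A N.
Proof.
move=> PJ.
pose T := {X : B -> Prop | proper_ideal_of A X /\ Defs.subset J X}.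
pose R (X Y : T) := `[< Defs.subset (sval X) (sval Y) >].
have tJ : T := exist _ J (conj PJ (fun _ => id)).
have [||C Ctot|[N [PN JN]] maxN] := classical_sets.ZL_preorder tJ (R := R).
- by move=> X; apply/asboolP.
- by move=> X Y Z /asboolP XY /asboolP YZ; apply/asboolP => x /XY /YZ.
- pose G X := X = J \/ exists2 Y, C Y & sval Y = X.
  have GP X : G X -> proper_ideal_of A X /\ Defs.subset J X.
    by case=> [-> | [Y _ <-]]; [exact: conj PJ (fun _ => id) | exact: (svalP Y)].
  have Gtot X Y : G X -> G Y -> Defs.subset X Y \/ Defs.subset Y X.
    case=> [-> | [X' CX' <-]]; first by move=> /GP [_ JY]; left.
    case=> [-> | [Y' CY' <-]]; first by right; case: (svalP X').
    by have [/asboolP | /asboolP] := Ctot X' Y' CX' CY'; [left | right].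
  have PU := proper_ideal_of_chain_union (ex_intro _ J (or_introl erefl))
    (fun X GX => proj1 (GP X GX)) Gtot.
  exists (exist _ _ (conj PU (fun x Jx => ex_intro2 _ _ J (or_introl erefl) Jx))).
  by move=> Y CY; apply/asboolP => x Yx; exists (sval Y) => //; right; exists Y.
- exists N; split=> //; split=> // D PD ND.
  have JD : Defs.subset J D by move=> x /JN /ND.
  by move: (maxN (exist _ D (conj PD JD))) => /(_ (asboolT ND)) /asboolP.
Qed.

Lemma exists_prime_ideal_of J :
  proper_ideal_of A J -> exists Q, Defs.subset J Q /\ is_prime_ideal_of A Q.
Proof.
move=> /exists_maximal_ideal_of [N [JN maxN]].
by exists N; split=> //; apply: maximal_ideal_of_prime.
Qed.

End Subring.

Lemma mem_closure_singleton (B : comPzRingType) (A P Q : B -> Prop) :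
  is_prime_ideal_of A Q -> Defs.subset P Q -> zariski_closure A (singleton_pt P) Q.
Proof. by move=> primeQ PQ; split=> // E _ EP x /(proj2 (EP P erefl)) /PQ. Qed.

Section MaximalIdeals.
Variable B : comPzRingType.
Implicit Types M : B -> Prop.

Lemma is_ideal_ofT M : is_ideal M -> is_ideal_of (fun _ => True) M.
Proof. by move=> [M0 [MD MM]]; do !split=> //; move=> b x _; apply: MM. Qed.

Lemma maximal_ideal_ofT M : is_maximal_ideal M -> maximal_ideal_of (fun _ => True) M.
Proof.
move=> [idM [nM1 maxM]]; split; first by split=> //; apply: is_ideal_ofT.
move=> C [[_ [C0 [CD CM]]] nC1] MC; apply: maxM => //; split=> //; split=> //.
by move=> b x; apply: CM.
Qed.

Lemma maximal_ideal_prime M x y : is_maximal_ideal M -> M (x * y) -> M x \/ M y.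
Proof.
move=> /maximal_ideal_ofT /maximal_ideal_of_prime primeM.
have subT : is_subring (fun _ : B => True) by do !split.
by have [_ [_]] := primeM subT; apply.
Qed.

Lemma maximal_ideal_rad M : is_maximal_ideal M -> Defs.subset (Defs.rad M) M.
Proof.
move=> maxM x [n]; elim: n => [|n IHn]; first by rewrite expr0 => M1; case: maxM => _ [].
by rewrite exprS => /(maximal_ideal_prime maxM) [].
Qed.

Lemma maximal_ideal_sub_eq M (M' : B -> Prop) : is_maximal_ideal M -> is_maximal_ideal M' ->
  Defs.subset M M' -> forall x, M x <-> M' x.
Proof.
move=> [_ [_ maxM]] [idM' [nM'1 _]] MM' x; split; first exact: MM'.
exact: maxM idM' MM' nM'1 x.
Qed.

Lemma dense_cap_maximal_not_subset (A : B -> Prop) M (M' : B -> Prop) : dense_subring A ->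
  is_maximal_ideal M -> is_maximal_ideal M' -> ~ (forall x, M x <-> M' x) ->
  ~ Defs.subset (cap M A) (cap M' A).
Proof.
move=> denseA maxM maxM' neqMM' MAM'A.
have [b Mb nM'b] : exists2 b, M b & ~ M' b.
  apply: contrapT => nMM'; apply: neqMM'; apply: maximal_ideal_sub_eq => // x Mx.
  by apply: contrapT => nM'x; apply: nMM'; exists x.
have nradb : ~ Defs.rad M' b by move=> /(maximal_ideal_rad maxM').
have [a [nrada Aab]] := denseA M' (proj1 maxM') b nradb.
have [M'ab _] : cap M' A (a * b).
  by apply: MAM'A; split=> //; case: maxM => [[_ [_ MM]] _]; apply: MM.
case: (maximal_ideal_prime maxM' M'ab) => // M'a.
by apply: nrada; exists 1%N; rewrite expr1.
Qed.

End MaximalIdeals.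

Theorem theorem4p5 (B : comPzRingType) (A : B -> Prop) :
  is_subring A -> dense_subring A -> weak_completely_normal A ->
  forall M M' : B -> Prop, is_maximal_ideal M -> is_maximal_ideal M' -> ~ (forall x, M x <-> M' x) ->
  forall z, ideal_sum (cap M A) (cap M' A) z <-> A z.
Proof.
move=> subA denseA wcnA M M' maxM maxM' neqMM' z.
have idMA := is_ideal_of_cap subA (proj1 maxM).
have idM'A := is_ideal_of_cap subA (proj1 maxM').
have idJ := is_ideal_of_sum subA idMA idM'A.
split=> [|Az]; first by case: idJ => JA _; apply: JA.
apply: contrapT => nJz.
have nJ1 : ~ ideal_sum (cap M A) (cap M' A) 1.
  by move=> J1; apply: nJz; apply: ideal_of_1_all idJ J1 z Az.
have [Q [JQ primeQ]] := exists_prime_ideal_of subA (conj idJ nJ1).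
have neqM'M : ~ (forall x, M' x <-> M x) by move=> eqM'M; apply: neqMM' => x; rewrite eqM'M.
apply: (wcnA M M' maxM maxM' neqMM' _ _ Q).
- exact: dense_cap_maximal_not_subset denseA maxM maxM' neqMM'.
- exact: dense_cap_maximal_not_subset denseA maxM' maxM neqM'M.
- apply: mem_closure_singleton => // x /(ideal_sum_subl (proj1 (proj2 idM'A))); exact: JQ.
- apply: mem_closure_singleton => // x /(ideal_sum_subr (proj1 (proj2 idMA))); exact: JQ.
Qed.
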